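(* Consider the optimization problem: for every total allocated bandwidth $W\in(0,W_{tot}]$, choose the bandwidths $w_u>0$ and transmit powers $p_u$ of the users $u\in\mathcal{U}$ so as to maximize the energy efficiency $\textit{EE}=\frac{\sum_{u\in\mathcal{U}} T_u\,\mathbb{P}(C_u\ge T_u)}{\sum_{u\in\mathcal{U}} p_u}$, subject to (1) $p_u=\frac{gN_0\Gamma}{\ell_u}\left(2^{T_u/w_u}-1\right)w_u$ for every $u$, and (2) $\sum_{u\in\mathcal{U}} w_u=W$. The solution of this problem requires that, for the set of users experiencing the same attenuation $\ell_u$, the bandwidth $w_u$ is proportional to the traffic demand $T_u$, and as a result the power spectral density $\delta p_u\triangleq \frac{p_u}{w_u}$ is constant among these users.
   Context: Single-cell downlink OFDMA model: a base station serves a set $\mathcal{U}$ of $N_U$ users, user $u$ having data rate demand $T_u$, allocated bandwidth $w_u$ and dedicated transmit power $p_u$, with total power and bandwidth budgets $P_{tot}$ and $W_{tot}$. The user capacity is $C_u=w_u\log_2\!\left(1+\frac{1}{\Gamma}\frac{p_u h_f \ell_u}{w_u N_0}\right)$, where $\Gamma$ is the SNR gap, $N_0$ the noise power spectral density, $\ell_u$ the deterministic path-loss attenuation (known at the base station), and $h_f$ is Rayleigh fading, i.e. exponentially distributed with mean $1/\tau$. Requiring the success probability $\mathbb{P}(C_u\ge T_u)$ to equal a threshold $0<c<1$ gives the minimum required power $p_u=\frac{gN_0\Gamma}{\ell_u}\left(2^{T_u/w_u}-1\right)w_u$ with $g\triangleq \frac{\tau}{\ln(1/c)}>0$. *)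

From HB Require Import structures.
From mathcomp Require Import all_boot all_order all_algebra.
From mathcomp Require Import all_classical all_reals all_analysis.
Set Implicit Arguments. Unset Strict Implicit. Unset Printing Implicit Defensive.
Import Order.TTheory GRing.Theory Num.Theory.
Local Open Scope classical_set_scope.
Local Open Scope ring_scope.

Section OFDMA.
Context {R : realType}.

Definition log2 (x : R) : R := ln x / ln 2.

Definition gfac (tau c : R) : R := tau / ln (c^-1).

(* user capacity C_u = w log2(1 + (1/Gamma) p h l / (w N0)) for fading value h *)
Definition capacity (Gam N0 l w p h : R) : R :=
  w * log2 (1 + Gam^-1 * (p * h * l / (w * N0))).

(* success probability P(C_u >= T_u), h_f ~ exponential with rate tau (mean 1/tau) *)
Definition succ_prob (tau Gam N0 l T w p : R) : R :=
  fine (exponential_prob tau [set h : R | T <= capacity Gam N0 l w p h]).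

Definition req_power (g N0 Gam l T w : R) : R :=
  g * N0 * Gam / l * (2 `^ (T / w) - 1) * w.

Variable U : finType.

Definition EE (tau c N0 Gam : R) (l T w : U -> R) : R :=
  (\sum_(u : U) T u * succ_prob tau Gam N0 (l u) (T u) (w u)
       (req_power (gfac tau c) N0 Gam (l u) (T u) (w u)))
  / (\sum_(u : U) req_power (gfac tau c) N0 Gam (l u) (T u) (w u)).

Definition feasible (W : R) (w : U -> R) : Prop :=
  (forall u, 0 < w u) /\ \sum_(u : U) w u = W.

Definition optimal (tau c N0 Gam W : R) (l T w : U -> R) : Prop :=
  feasible W w /\
  forall w' : U -> R, feasible W w' -> EE tau c N0 Gam l T w' <= EE tau c N0 Gam l T w.

End OFDMA.

(* With the powers fixed by constraint (1), a user succeeds exactly when the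
   fading exceeds 1/g, whatever its bandwidth; so the numerator of EE is a
   constant and maximizing EE amounts to minimizing the total power
   \sum_u K_u w_u (2^(T_u/w_u) - 1) with K_u = g N0 Gam / l_u.  Each summand is
   the perspective of the convex map x |-> 2^x - 1, hence strictly subadditive
   unless the ratios T/w agree.  If two users with equal attenuation had
   different ratios T/w, pooling their bandwidth and splitting it in proportion
   to their demands would keep \sum_u w_u fixed and strictly lower the total
   power, contradicting optimality. *)

From HB Require Import structures.
From mathcomp Require Import all_boot all_order all_algebra.
From mathcomp Require Import all_classical all_reals all_analysis.
From mathcomp Require Import ring lra.
Set Implicit Arguments. Unset Strict Implicit. Unset Printing Implicit Defensive.
Import Order.TTheory GRing.Theory Num.Theory.
Local Open Scope classical_set_scope.
Local Open Scope ring_scope.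

Section PerspectivePower.
Variables (R : realType) (a : R).
Hypothesis a_gt1 : 1 < a.

Let ln_a_gt0 : 0 < ln a. Proof. exact: ln_gt0. Qed.

Let powR_shift (x y : R) : a `^ x = a `^ y * expR ((x - y) * ln a).
Proof.
by rewrite /powR gt_eqF ?(lt_trans ltr01) // -expRD mulrBl addrC subrK.
Qed.

Lemma powR_tangent_le (x y : R) : a `^ y * (1 + (x - y) * ln a) <= a `^ x.
Proof.
by rewrite [leRHS](powR_shift x y) ler_pM2l ?powR_gt0 ?(lt_trans ltr01) // expR_ge1Dx.
Qed.

Lemma powR_tangent_lt (x y : R) : x != y -> a `^ y * (1 + (x - y) * ln a) < a `^ x.
Proof.
move=> xy; rewrite [ltRHS](powR_shift x y) ltr_pM2l ?powR_gt0 ?(lt_trans ltr01) //.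
by apply: expR_gt1Dx; rewrite mulf_neq0 ?subr_eq0 // gt_eqF.
Qed.

Definition persp_powm1 (T w : R) : R := w * (a `^ (T / w) - 1).

Lemma persp_powm1_gt0 (T w : R) : 0 < T -> 0 < w -> 0 < persp_powm1 T w.
Proof.
move=> T0 w0; rewrite mulr_gt0 // subr_gt0 /powR gt_eqF ?(lt_trans ltr01) //.
by rewrite expR_gt1 mulr_gt0 ?divr_gt0.
Qed.

Lemma persp_powm1D_eq (T1 T2 w1 w2 : R) : 0 < w1 -> 0 < w2 ->
  T1 / w1 = T2 / w2 ->
  persp_powm1 (T1 + T2) (w1 + w2) = persp_powm1 T1 w1 + persp_powm1 T2 w2.
Proof.
move=> w1_gt0 w2_gt0 ratio; rewrite /persp_powm1.
have -> : (T1 + T2) / (w1 + w2) = T1 / w1.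
  have w12_gt0 : 0 < w1 + w2 by rewrite addr_gt0.
  apply/eqP; rewrite eqr_div ?(gt_eqF w1_gt0) ?(gt_eqF w12_gt0) //; apply/eqP.
  move/eqP: ratio; rewrite eqr_div ?(gt_eqF w1_gt0) ?(gt_eqF w2_gt0) // => /eqP.
  lra.
by rewrite -ratio mulrDl.
Qed.

Lemma persp_powm1D_lt (T1 T2 w1 w2 : R) : 0 < w1 -> 0 < w2 ->
  T1 / w1 != T2 / w2 ->
  persp_powm1 (T1 + T2) (w1 + w2) < persp_powm1 T1 w1 + persp_powm1 T2 w2.
Proof.
move=> w1_gt0 w2_gt0 ratio.
set X := (T1 + T2) / (w1 + w2); set x1 := T1 / w1; set x2 := T2 / w2.
have e1 : w1 * x1 = T1 by rewrite /x1 mulrCA divff ?mulr1 // gt_eqF.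
have e2 : w2 * x2 = T2 by rewrite /x2 mulrCA divff ?mulr1 // gt_eqF.
have eX : (w1 + w2) * X = T1 + T2.
  by rewrite /X mulrCA divff ?mulr1 // gt_eqF // addr_gt0.
have x1X : x1 != X.
  apply: contra_neq ratio => x1E; rewrite -/x1 -/x2 x1E.
  have : w2 * X = w2 * x2 by move: e1; rewrite x1E; lra.
  by apply: mulfI; rewrite gt_eqF.
(* the weighted tangent lines at [X] sum to [(w1 + w2) a^X], as [X] is the weighted mean *)
have tangents : w1 * (a `^ X * (1 + (x1 - X) * ln a))
    + w2 * (a `^ X * (1 + (x2 - X) * ln a)) = (w1 + w2) * a `^ X.
  transitivity ((w1 + w2) * a `^ X
    + a `^ X * ln a * (w1 * x1 + w2 * x2 - (w1 + w2) * X)); first ring.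
  by rewrite e1 e2 eX subrr mulr0 addr0.
have lt1 : w1 * (a `^ X * (1 + (x1 - X) * ln a)) < w1 * a `^ x1.
  by rewrite ltr_pM2l // powR_tangent_lt.
have le2 : w2 * (a `^ X * (1 + (x2 - X) * ln a)) <= w2 * a `^ x2.
  by rewrite ler_pM2l // powR_tangent_le.
rewrite /persp_powm1 -/X -/x1 -/x2; lra.
Qed.

End PerspectivePower.

Lemma sumrB_off2 (V : zmodType) (I : finType) (F G : I -> V) (u v : I) :
  u != v -> (forall i, i != u -> i != v -> F i = G i) ->
  \sum_i F i - \sum_i G i = (F u - G u) + (F v - G v).
Proof.
move=> uv FG; rewrite -sumrB (bigD1 u) //= (bigD1 v) 1?eq_sym //=.
by rewrite big1 ?addr0 // => i /andP[iu iv]; rewrite FG ?subrr.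
Qed.

Section Rebalance.
Variables (R : realType) (U : finType) (a : R) (K T : U -> R).
Hypotheses (a_gt1 : 1 < a) (K_gt0 : forall u, 0 < K u) (T_gt0 : forall u, 0 < T u).

Definition power_cost (w : U -> R) : R := \sum_u K u * persp_powm1 a (T u) (w u).

Definition rebalance (u v : U) (w : U -> R) : U -> R :=
  fun x => if (x == u) || (x == v) then T x * ((w u + w v) / (T u + T v)) else w x.

Section Pair.
Variables (u v : U) (w : U -> R).
Hypotheses (uv : u != v) (w_gt0 : forall x, 0 < w x).

Let Tuv_gt0 : 0 < T u + T v. Proof. by rewrite addr_gt0. Qed.
Let wuv_gt0 : 0 < w u + w v. Proof. by rewrite addr_gt0. Qed.
Let share_gt0 : 0 < (w u + w v) / (T u + T v). Proof. by rewrite divr_gt0. Qed.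

Let rebalance_off (x : U) : x != u -> x != v -> rebalance u v w x = w x.
Proof. by move=> xu xv; rewrite /rebalance (negbTE xu) (negbTE xv). Qed.

Let rebalance_u : rebalance u v w u = T u * ((w u + w v) / (T u + T v)).
Proof. by rewrite /rebalance eqxx. Qed.

Let rebalance_v : rebalance u v w v = T v * ((w u + w v) / (T u + T v)).
Proof. by rewrite /rebalance eqxx orbT. Qed.

Let rebalance_uv : rebalance u v w u + rebalance u v w v = w u + w v.
Proof. by rewrite rebalance_u rebalance_v -mulrDl mulrCA divff ?mulr1 // gt_eqF. Qed.

Lemma rebalance_gt0 (x : U) : 0 < rebalance u v w x.
Proof. by rewrite /rebalance; case: ifP => _; [exact: mulr_gt0 | exact: w_gt0]. Qed.

Lemma sum_rebalance : \sum_x rebalance u v w x = \sum_x w x.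
Proof.
apply/eqP; rewrite -subr_eq0 (sumrB_off2 uv rebalance_off); apply/eqP.
by move: rebalance_uv; lra.
Qed.

Lemma power_cost_rebalance_lt : K u = K v -> T u / w u != T v / w v ->
  power_cost (rebalance u v w) < power_cost w.
Proof.
move=> Kuv ratio; rewrite -subr_lt0 /power_cost.
rewrite (sumrB_off2 (G := fun x => K x * persp_powm1 a (T x) (w x)) uv);
  last by move=> x xu xv; rewrite rebalance_off.
have pooled : persp_powm1 a (T u) (rebalance u v w u)
    + persp_powm1 a (T v) (rebalance u v w v) = persp_powm1 a (T u + T v) (w u + w v).
  rewrite -rebalance_uv -persp_powm1D_eq ?rebalance_gt0 // rebalance_u rebalance_v.
  by rewrite !invfM !mulrA !divff ?gt_eqF.
have := persp_powm1D_lt a_gt1 (w_gt0 u) (w_gt0 v) ratio.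
rewrite -pooled -(ltr_pM2l (K_gt0 v)) !mulrDr -Kuv; lra.
Qed.

End Pair.

Lemma power_cost_min_ratio (w : U -> R) (u v : U) : (forall x, 0 < w x) ->
  (forall w', (forall x, 0 < w' x) -> \sum_x w' x = \sum_x w x ->
     power_cost w <= power_cost w') ->
  K u = K v -> T u / w u = T v / w v.
Proof.
move=> w_gt0 w_min Kuv; have [->//|uv] := eqVneq u v.
apply/eqP; apply: contraT => ratio.
have w'_gt0 : forall x, 0 < rebalance u v w x by apply: rebalance_gt0.
have := w_min _ w'_gt0 (sum_rebalance w uv).
by rewrite leNgt power_cost_rebalance_lt.
Qed.

End Rebalance.

Lemma sumr_gt0 (R : numDomainType) (I : finType) (i0 : I) (F : I -> R) :
  (forall i, 0 < F i) -> 0 < \sum_i F i.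
Proof.
move=> F_gt0; rewrite (bigD1 i0) //= ltr_pwDl //.
by apply: sumr_ge0 => i _; apply: ltW.
Qed.

Lemma exponential_prob_itvcy_ge (R : realType) (rate x : R) : 0 < rate -> 0 < x ->
  ((expR (- rate * x))%:E <= exponential_prob rate `[x, +oo[)%E.
Proof.
move=> rate_gt0 x_gt0.
pose P := exponential_distribution_exponential_prob__canonical__probability_measure_Probability
  rate_gt0.
have below_x : ~` `[x, +oo[ `<=` `]-oo, 0[ `|` `[0, x]%classic.
  move=> y /=; rewrite !in_itv /= andbT => /negP; rewrite -ltNge => yx.
  by case: (ltP y 0) => y0; [left | right; rewrite (ltW yx)].
have P_neg : P `]-oo, 0[%classic = 0%E.
  rewrite /P /= /exponential_prob integral0_eq // => y /=; rewrite in_itv /= => y0.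
  by rewrite lt0_exponential_pdf.
have P_below : (P (~` `[x, +oo[) <= 1 - (expR (- rate * x))%:E)%E.
  rewrite -(@exponential_prob_itv0c _ rate x) // -[X in (_ <= X)%E]add0e -P_neg.
  apply: le_trans (measureU2 _ _ _) => //.
  by apply: (le_measure P) below_x; rewrite inE; [apply: measurableC | apply: measurableU].
change ((expR (- rate * x))%:E <= P `[x, +oo[%classic)%E.
rewrite -[`[x, +oo[%classic]setCK probability_setC; last exact: measurableC.
rewrite leeBrDr ?fin_num_measure //; last exact: measurableC.
by rewrite -leeBrDl.
Qed.

Lemma exponential_prob_itvcy_gt0 (R : realType) (rate x : R) : 0 < rate -> 0 < x ->
  0 < fine (exponential_prob rate `[x, +oo[).
Proof.
move=> rate_gt0 x_gt0.
pose P := exponential_distribution_exponential_prob__canonical__probability_measure_Probability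
  rate_gt0.
have fin : P `[x, +oo[%classic \is a fin_num by rewrite fin_num_measure.
rewrite -lte_fin; change (0 < (fine (P `[x, +oo[%classic))%:E)%E; rewrite fineK //.
by apply: lt_le_trans (exponential_prob_itvcy_ge rate_gt0 x_gt0); rewrite lte_fin expR_gt0.
Qed.

Lemma ler_log2 (R : realType) (x y : R) : 0 < y -> (x <= log2 y) = (2 `^ x <= y).
Proof.
move=> y_gt0; have ln2_gt0 : 0 < ln (2 : R) by apply: ln_gt0; lra.
by rewrite /log2 ler_pdivlMr // -ler_expR lnK ?posrE // /powR gt_eqF.
Qed.

Lemma capacity_req_power_ge (R : realType) (g N0 Gam l T w h : R) :
  0 < g -> 0 < N0 -> 0 < Gam -> 0 < l -> 0 < T -> 0 < w ->
  (T <= capacity Gam N0 l w (req_power g N0 Gam l T w) h) = (g^-1 <= h).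
Proof.
move=> g_gt0 N0_gt0 Gam_gt0 l_gt0 T_gt0 w_gt0.
set A := 2 `^ (T / w) - 1.
have A_gt0 : 0 < A.
  have two_gt1 : (1 : R) < 2 by lra.
  by have := persp_powm1_gt0 two_gt1 T_gt0 w_gt0; rewrite pmulr_rgt0.
have -> : capacity Gam N0 l w (req_power g N0 Gam l T w) h = w * log2 (1 + g * A * h).
  rewrite /capacity /req_power -/A; congr (_ * log2 (1 + _)).
  by field; rewrite !gt_eqF.
rewrite -[g^-1 <= h](ler_pM2l g_gt0) mulfV ?gt_eqF //.
rewrite -{1}(divfK (lt0r_neq0 w_gt0) T) [w * _]mulrC ler_pM2r //.
have [y_le0 | y_gt0] := leP (1 + g * A * h) 0.
  rewrite /log2 ln0 // mul0r; apply/idP/idP => [|gh]; first by have := divr_gt0 T_gt0 w_gt0; lra.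
  have : A <= A * (g * h) by rewrite ler_peMr // ltW.
  have : g * A * h = A * (g * h) by ring.
  lra.
rewrite ler_log2 // -[2 `^ _](subrK 1) -/A addrC lerD2l (mulrC g) -mulrA.
by rewrite ler_pMr.
Qed.

Lemma gfac_gt0 (R : realType) (tau c : R) : 0 < tau -> 0 < c -> c < 1 -> 0 < gfac tau c.
Proof. by move=> tau_gt0 c_gt0 c_lt1; rewrite divr_gt0 // ln_gt0 // invf_gt1. Qed.

Lemma req_powerE (R : realType) (g N0 Gam l T w : R) :
  req_power g N0 Gam l T w = g * N0 * Gam / l * persp_powm1 2 T w.
Proof. by rewrite /req_power /persp_powm1 -mulrA [_ * w]mulrC. Qed.

Lemma succ_prob_req_power (R : realType) (tau g N0 Gam l T w : R) :
  0 < g -> 0 < N0 -> 0 < Gam -> 0 < l -> 0 < T -> 0 < w ->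
  succ_prob tau Gam N0 l T w (req_power g N0 Gam l T w)
  = fine (exponential_prob tau `[g^-1, +oo[).
Proof.
move=> g_gt0 N0_gt0 Gam_gt0 l_gt0 T_gt0 w_gt0; rewrite /succ_prob; congr (fine (_ _)).
apply/seteqP; split => h /=; rewrite in_itv /= andbT capacity_req_power_ge //.
Qed.

Section EnergyEfficiency.
Variables (R : realType) (U : finType) (tau c N0 Gam : R) (l T : U -> R).
Hypotheses (tau_gt0 : 0 < tau) (c_gt0 : 0 < c) (c_lt1 : c < 1).
Hypotheses (N0_gt0 : 0 < N0) (Gam_gt0 : 0 < Gam).
Hypotheses (l_gt0 : forall u, 0 < l u) (T_gt0 : forall u, 0 < T u).

Let g := gfac tau c.
Let g_gt0 : 0 < g. Proof. exact: gfac_gt0. Qed.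

Definition power_weight (u : U) : R := g * N0 * Gam / l u.

Lemma power_weight_gt0 (u : U) : 0 < power_weight u.
Proof. by apply: divr_gt0 => //; apply: mulr_gt0 => //; apply: mulr_gt0. Qed.

Definition succ_level : R := fine (exponential_prob tau `[g^-1, +oo[).

Lemma EE_power_cost (w : U -> R) : (forall u, 0 < w u) ->
  EE tau c N0 Gam l T w = (\sum_u T u * succ_level) / power_cost 2 power_weight T w.
Proof.
move=> w_gt0; rewrite /EE /power_cost; congr (_ / _); apply: eq_bigr => u _.
  by rewrite succ_prob_req_power.
by rewrite req_powerE.
Qed.

Lemma optimal_min_power_cost (W : R) (w : U -> R) : optimal tau c N0 Gam W l T w ->
  forall w', feasible W w' -> power_cost 2 power_weight T w <= power_cost 2 power_weight T w'.
Proof.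
move=> [[w_gt0 _] w_opt] w' [w'_gt0 w'_sum].
have [u0 _ | U_empty] := pickP (@predT U); last first.
  by rewrite /power_cost !big1 // => u; have := U_empty u.
have two_gt1 : (1 : R) < 2 by lra.
have cost_gt0 (z : U -> R) : (forall u, 0 < z u) -> 0 < power_cost 2 power_weight T z.
  move=> z_gt0; apply: (sumr_gt0 u0) => u.
  by apply: mulr_gt0; [exact: power_weight_gt0 | exact: persp_powm1_gt0].
have succ_gt0 : 0 < \sum_u T u * succ_level.
  apply: (sumr_gt0 u0) => u; apply: mulr_gt0 => //.
  by apply: exponential_prob_itvcy_gt0; rewrite ?invr_gt0.
have := w_opt w' (conj w'_gt0 w'_sum).
rewrite !EE_power_cost // ler_pM2l // lef_pV2 ?posrE //; exact: cost_gt0.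
Qed.

End EnergyEfficiency.

Theorem theorem1 (R : realType) (U : finType)
  (tau c N0 Gam Wtot W : R) (l T : U -> R)
  (htau : 0 < tau) (hc0 : 0 < c) (hc1 : c < 1)
  (hN0 : 0 < N0) (hGam : 0 < Gam)
  (hl : forall u, 0 < l u) (hT : forall u, 0 < T u)
  (hW0 : 0 < W) (hWtot : W <= Wtot)
  (w : U -> R) :
  optimal tau c N0 Gam W l T w ->
  (forall l0 : R, exists k : R, forall u, l u = l0 -> w u = k * T u) /\
  (forall u v, l u = l v ->
     req_power (gfac tau c) N0 Gam (l u) (T u) (w u) / w u =
     req_power (gfac tau c) N0 Gam (l v) (T v) (w v) / w v).
Proof.
move=> w_opt; have [[w_gt0 w_sum] _] := w_opt.
have two_gt1 : (1 : R) < 2 by lra.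
have K_gt0 := power_weight_gt0 htau hc0 hc1 hN0 hGam hl.
have ratio u v : l u = l v -> T u / w u = T v / w v.
  move=> luv; apply: (power_cost_min_ratio two_gt1 K_gt0 hT w_gt0).
    move=> w' w'_gt0 w'_sum.
    apply: (optimal_min_power_cost htau hc0 hc1 hN0 hGam hl hT w_opt).
    exact: conj w'_gt0 (etrans w'_sum w_sum).
  by rewrite /power_weight luv.
split=> [l0 | u v luv].
- have [u0 /eqP lu0 | no_user] := pickP (fun u => l u == l0); last first.
    by exists 0 => u lu; have := no_user u; rewrite lu eqxx.
  exists (w u0 / T u0) => u lu.
  have := ratio u u0 (etrans lu (esym lu0)).
  by move/(congr1 GRing.inv); rewrite !invf_div => <-; rewrite divfK ?gt_eqF.
- by rewrite /req_power !mulfK ?gt_eqF // luv (ratio u v luv).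
Qed.
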